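(* For all even integers $n\ge2$ and real numbers $a\ge1$, $x\in(0,\pi)$, we have $S^*_{n,a}(x)\ge 2\sin(x)$. Equality holds if and only if $n=2$, $a=1$ (any $x$), or $n=4$, $a=1$, $x=\pi/2$.
   Context: For a real number $a$ and integers $0\le m$, $\binom{m+a}{m}=\frac{(a+1)(a+2)\cdots(a+m)}{m!}$ (equal to $1$ when $m=0$). For an integer $n\ge1$, $S^*_{n,a}(x)=\sum_{1\le j\le n,\ j\text{ odd}}\binom{n+a-j}{n-j}\sin(jx)$. *)

From Stdlib Require Import Reals Lra Lia Arith.
Open Scope R_scope.

(* Generalized binomial: gbinom m a = binom(m+a, m) = (a+1)(a+2)...(a+m)/m!  (= 1 for m = 0). *)
Fixpoint rising_prod (m : nat) (a : R) : R :=
  match m with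
  | O => 1
  | S k => rising_prod k a * (a + INR (S k))
  end.

Definition gbinom (m : nat) (a : R) : R := rising_prod m a / INR (fact m).

Definition Sstar (n : nat) (a x : R) : R :=
  sum_f_R0 (fun j => if Nat.odd j then gbinom (n - j) a * sin (INR j * x) else 0) n.

From Stdlib Require Import Reals Lra Lia Arith.
Open Scope R_scope.

(* For n = 2M + 4, multiplying S* by sin x and summing by parts against the
   partial sums of sin((2l+1)x), which telescope to sin((k+1)x)^2 / sin x, gives
     sin x * S* = (a+1) sin((M+2)x)^2 + sum_{k<=M} d_k sin((k+1)x)^2,
   where each d_k is a difference of two generalized binomials with indices two
   apart, hence d_k >= 2 when a >= 1.  Keeping the terms k = 0 and k = M bounds
   this below by 2 sin^2 x + 2 (sin((M+1)x)^2 + sin((M+2)x)^2), which is strictly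
   bigger than 2 sin^2 x as soon as M >= 1.  For n = 4 only the term k = 0 is
   present and d_0 - 2 = (a-1)(a^2+7a+12)/6, which yields the equality case. *)

Lemma gbinom_S m a : gbinom (S m) a = gbinom m a * (a + INR (S m)) / INR (S m).
Proof.
  unfold gbinom; cbn [rising_prod]; rewrite fact_simpl, mult_INR.
  assert (INR (fact m) <> 0) by (apply not_0_INR, fact_neq_0).
  assert (INR (S m) <> 0) by (apply not_0_INR; lia).
  field; split; assumption.
Qed.

Lemma gbinom_1 a : gbinom 1 a = a + 1.
Proof. unfold gbinom; simpl; field. Qed.

Lemma gbinom_3_sub_1 a :
  gbinom 3 a - gbinom 1 a = 2 + (a - 1) * (a ^ 2 + 7 * a + 12) / 6.
Proof. unfold gbinom; simpl; field. Qed.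

Lemma gbinom_ge_succ m a : 1 <= a -> INR m + 1 <= gbinom m a.
Proof.
  intro Ha; induction m as [|m IHm].
  - unfold gbinom; simpl; lra.
  - rewrite gbinom_S, S_INR in *.
    assert (0 <= INR m) by apply pos_INR.
    apply Rmult_le_reg_r with (INR m + 1); [lra|].
    unfold Rdiv; rewrite Rmult_assoc, Rinv_l by lra; nra.
Qed.

Lemma gbinom_SS_sub_ge m a : 1 <= a -> 2 <= gbinom (S (S m)) a - gbinom m a.
Proof.
  intro Ha; rewrite !gbinom_S, !S_INR.
  pose proof (gbinom_ge_succ m a Ha) as Hg.
  assert (0 <= INR m) by apply pos_INR.
  set (g := gbinom m a) in *; set (r := INR m) in *.
  replace (g * (a + (r + 1)) / (r + 1) * (a + (r + 1 + 1)) / (r + 1 + 1) - g)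
    with (g * ((a + (r + 1)) * (a + (r + 2)) - (r + 1) * (r + 2)) / ((r + 1) * (r + 2)))
    by (field; lra).
  apply Rmult_le_reg_r with ((r + 1) * (r + 2)); [nra|].
  unfold Rdiv; rewrite Rmult_assoc, Rinv_l by nra.
  assert ((a + (r + 1)) * (a + (r + 2)) - (r + 1) * (r + 2) >= 2 * (r + 2)) by nra.
  nra.
Qed.

Lemma sin_add_mul_sin_sub A B : sin (A + B) * sin (A - B) = sin A ^ 2 - sin B ^ 2.
Proof.
  rewrite sin_plus, sin_minus.
  pose proof (sin2_cos2 A); pose proof (sin2_cos2 B); unfold Rsqr in *; nra.
Qed.

Lemma sin_mul_sum_sin_odd x k :
  sin x * sum_f_R0 (fun l => sin (INR (2 * l + 1) * x)) k = sin (INR (k + 1) * x) ^ 2.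
Proof.
  induction k as [|k IHk].
  - simpl; rewrite Rmult_1_l; ring.
  - rewrite tech5, Rmult_plus_distr_l, IHk.
    pose proof (sin_add_mul_sin_sub (INR (S k + 1) * x) (INR (k + 1) * x)) as E.
    replace (INR (S k + 1) * x + INR (k + 1) * x) with (INR (2 * S k + 1) * x) in E
      by (rewrite !plus_INR, !mult_INR, !S_INR; simpl; ring).
    replace (INR (S k + 1) * x - INR (k + 1) * x) with x in E
      by (rewrite !plus_INR, !S_INR; ring).
    lra.
Qed.

Lemma sin_sq_add_sin_sq_add_pos x y : sin x <> 0 -> 0 < sin y ^ 2 + sin (y + x) ^ 2.
Proof.
  intro Hx; rewrite sin_plus.
  pose proof (sin2_cos2 y); unfold Rsqr in *.
  destruct (Req_dec (sin y) 0) as [Hy|Hy].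
  - (* then cos y = +-1, so sin (y + x) = +- sin x *)
    rewrite Hy in *.
    assert (0 < sin x * sin x) by (apply Rsqr_pos_lt, Hx).
    replace ((0 * cos x + cos y * sin x) ^ 2) with (cos y * cos y * (sin x * sin x)) by ring.
    nra.
  - assert (0 < sin y * sin y) by (apply Rsqr_pos_lt, Hy).
    pose proof (pow2_ge_0 (sin y * cos x + cos y * sin x)).
    simpl (sin y ^ 2); lra.
Qed.

Lemma sin_double_eq_0_PI2 x : 0 < x -> x < PI -> sin (2 * x) = 0 -> x = PI / 2.
Proof.
  intros Hx0 HxPI; rewrite sin_2a.
  pose proof (sin_gt_0 x Hx0 HxPI); pose proof PI_RGT_0.
  destruct (total_order_T x (PI / 2)) as [[Hlt|Heq]|Hgt]; intro E; [|exact Heq|].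
  - pose proof (cos_gt_0 x ltac:(lra) Hlt); nra.
  - pose proof (cos_lt_0 x Hgt ltac:(lra)); nra.
Qed.

Lemma sum_f_R0_by_parts u v N :
  sum_f_R0 (fun k => u k * v k) (S N) =
  u (S N) * sum_f_R0 v (S N) + sum_f_R0 (fun k => (u k - u (S k)) * sum_f_R0 v k) N.
Proof.
  induction N as [|N IHN].
  - simpl; ring.
  - rewrite (tech5 (fun k => u k * v k) (S N)), IHN,
      (tech5 (fun k => (u k - u (S k)) * sum_f_R0 v k) N), (tech5 v (S N)).
    ring.
Qed.

Lemma sum_f_R0_ge_first_last f N :
  (1 <= N)%nat -> (forall k, (k <= N)%nat -> 0 <= f k) ->
  f 0%nat + f N <= sum_f_R0 f N.
Proof.
  intros HN Hf; destruct N as [|N]; [lia|]; rewrite tech5.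
  assert (Hfirst : forall m, (m <= N)%nat -> f 0%nat <= sum_f_R0 f m).
  { induction m as [|m IHm]; intro Hm; simpl; [lra|].
    pose proof (Hf (S m) ltac:(lia)); pose proof (IHm ltac:(lia)); lra. }
  pose proof (Hfirst N (Nat.le_refl N)); lra.
Qed.

Lemma sum_f_R0_pairs g M :
  sum_f_R0 g (2 * M + 2) = g 0%nat + sum_f_R0 (fun k => g (2 * k + 1)%nat + g (2 * k + 2)%nat) M.
Proof.
  induction M as [|M IHM].
  - simpl; ring.
  - replace (2 * S M + 2)%nat with (S (S (2 * M + 2))) by lia.
    rewrite !tech5, IHM.
    replace (S (2 * M + 2)) with (2 * S M + 1)%nat by lia.
    replace (S (2 * S M + 1)) with (2 * S M + 2)%nat by lia.
    ring.
Qed.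

Lemma sin_mul_sum_odd_sines (c : nat -> R) M x :
  sin x * sum_f_R0 (fun k => c k * sin (INR (2 * k + 1) * x)) (S M) =
  c (S M) * sin (INR (M + 2) * x) ^ 2 +
  sum_f_R0 (fun k => (c k - c (S k)) * sin (INR (k + 1) * x) ^ 2) M.
Proof.
  rewrite sum_f_R0_by_parts, Rmult_plus_distr_l.
  replace (M + 2)%nat with (S M + 1)%nat by lia.
  f_equal; [rewrite <- sin_mul_sum_sin_odd; ring|].
  rewrite scal_sum; apply sum_eq; intros k _; rewrite <- sin_mul_sum_sin_odd; ring.
Qed.

Lemma Sstar_even M a x :
  Sstar (2 * M + 2) a x =
  sum_f_R0 (fun k => gbinom (2 * (M - k) + 1) a * sin (INR (2 * k + 1) * x)) M.
Proof.
  unfold Sstar; rewrite sum_f_R0_pairs, Rplus_0_l.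
  apply sum_eq; intros k Hk.
  replace (2 * k + 1)%nat with (1 + 2 * k)%nat at 1 by lia.
  replace (2 * k + 2)%nat with (0 + 2 * (k + 1))%nat at 1 by lia.
  rewrite !Nat.odd_add_mul_2; cbn [Nat.odd Nat.even negb].
  replace (2 * M + 2 - (2 * k + 1))%nat with (2 * (M - k) + 1)%nat by lia.
  ring.
Qed.

Lemma sin_mul_Sstar_even M a x :
  sin x * Sstar (2 * M + 4) a x =
  (a + 1) * sin (INR (M + 2) * x) ^ 2 +
  sum_f_R0 (fun k => (gbinom (2 * (M - k) + 3) a - gbinom (2 * (M - k) + 1) a)
                     * sin (INR (k + 1) * x) ^ 2) M.
Proof.
  replace (2 * M + 4)%nat with (2 * S M + 2)%nat by lia.
  rewrite Sstar_even, sin_mul_sum_odd_sines, Nat.sub_diag, gbinom_1.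
  f_equal; apply sum_eq; intros k Hk.
  replace (2 * (S M - k) + 1)%nat with (2 * (M - k) + 3)%nat by lia.
  reflexivity.
Qed.

Lemma Sstar_2 a x : Sstar 2 a x = (a + 1) * sin x.
Proof. unfold Sstar, gbinom; simpl; rewrite !Rmult_1_l; field. Qed.

Lemma sin_mul_Sstar_4_sub a x :
  sin x * (Sstar 4 a x - 2 * sin x) =
  (a + 1) * sin (2 * x) ^ 2 + (a - 1) * (a ^ 2 + 7 * a + 12) / 6 * sin x ^ 2.
Proof.
  rewrite Rmult_minus_distr_l; change 4%nat with (2 * 0 + 4)%nat.
  rewrite sin_mul_Sstar_even; cbn -[gbinom sin].
  rewrite gbinom_3_sub_1, Rmult_1_l; replace ((1 + 1) * x) with (2 * x) by ring.
  field.
Qed.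

Lemma Sstar_4_spec a x :
  1 <= a -> 0 < x -> x < PI ->
  2 * sin x <= Sstar 4 a x /\ (Sstar 4 a x = 2 * sin x <-> a = 1 /\ x = PI / 2).
Proof.
  intros Ha Hx0 HxPI.
  pose proof (sin_gt_0 x Hx0 HxPI) as Hs.
  pose proof (sin_mul_Sstar_4_sub a x) as E4.
  set (u := (a + 1) * sin (2 * x) ^ 2) in E4.
  set (v := (a - 1) * (a ^ 2 + 7 * a + 12) / 6 * sin x ^ 2) in E4.
  assert (Hu : 0 <= u) by (apply Rmult_le_pos; [lra | apply pow2_ge_0]).
  assert (Hv : 0 <= v) by (unfold v; apply Rmult_le_pos; [|apply pow2_ge_0]; nra).
  split; [nra|]; split.
  - intro E; rewrite E, Rminus_diag, Rmult_0_r in E4.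
    assert (Ha1 : a = 1).
    { destruct (Rle_lt_dec a 1) as [|Ha1]; [lra|].
      assert (0 < (a - 1) * (a ^ 2 + 7 * a + 12)) by (apply Rmult_lt_0_compat; nra).
      assert (0 < sin x ^ 2) by (apply pow_lt, Hs).
      assert (0 < v) by (unfold v; apply Rmult_lt_0_compat; lra).
      lra. }
    assert (Hsin2 : sin (2 * x) ^ 2 = 0).
    { apply Rmult_eq_reg_l with (a + 1); [fold u; lra | lra]. }
    split; [exact Ha1|].
    apply sin_double_eq_0_PI2; [assumption.. |].
    apply Rsqr_0_uniq; unfold Rsqr; lra.
  - intros [-> ->]; unfold u, v in E4.
    replace (2 * (PI / 2)) with PI in E4 by field.
    rewrite sin_PI in E4; nra.
Qed.

Lemma Sstar_gt_2sin M a x :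
  (1 <= M)%nat -> 1 <= a -> 0 < x -> x < PI -> 2 * sin x < Sstar (2 * M + 4) a x.
Proof.
  intros HM Ha Hx0 HxPI.
  pose proof (sin_gt_0 x Hx0 HxPI) as Hs.
  apply Rmult_lt_reg_l with (sin x); [exact Hs|]; rewrite sin_mul_Sstar_even.
  set (d := fun k => (gbinom (2 * (M - k) + 3) a - gbinom (2 * (M - k) + 1) a)
                     * sin (INR (k + 1) * x) ^ 2).
  assert (Hd : forall k, (k <= M)%nat -> 2 * sin (INR (k + 1) * x) ^ 2 <= d k).
  { intros k _; apply Rmult_le_compat_r; [apply pow2_ge_0|].
    replace (2 * (M - k) + 3)%nat with (S (S (2 * (M - k) + 1))) by lia.
    apply gbinom_SS_sub_ge, Ha. }
  assert (Hsum : 2 * sin x ^ 2 + 2 * sin (INR (M + 1) * x) ^ 2 <= sum_f_R0 d M).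
  { pose proof (Hd 0%nat (Nat.le_0_l M)) as Hd0; pose proof (Hd M (Nat.le_refl M)) as HdM.
    cbn [Nat.add INR] in Hd0; rewrite Rmult_1_l in Hd0.
    pose proof (sum_f_R0_ge_first_last d M HM) as Hfl.
    enough (Hnonneg : forall k, (k <= M)%nat -> 0 <= d k) by (specialize (Hfl Hnonneg); lra).
    intros k Hk; pose proof (Hd k Hk); pose proof (pow2_ge_0 (sin (INR (k + 1) * x))); lra. }
  pose proof (sin_sq_add_sin_sq_add_pos x (INR (M + 1) * x) ltac:(lra)) as Hpos.
  replace (INR (M + 1) * x + x) with (INR (M + 2) * x) in Hpos
    by (rewrite !plus_INR; simpl; ring).
  assert (0 <= (a - 1) * sin (INR (M + 2) * x) ^ 2)
    by (apply Rmult_le_pos; [lra | apply pow2_ge_0]).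
  nra.
Qed.

Theorem theorem3p6 (n : nat) (a x : R) :
  Nat.Even n -> (2 <= n)%nat -> 1 <= a -> 0 < x -> x < PI ->
  Sstar n a x >= 2 * sin x /\
  (Sstar n a x = 2 * sin x <->
     ((n = 2%nat /\ a = 1) \/ (n = 4%nat /\ a = 1 /\ x = PI / 2))).
Proof.
  intros [p ->] Hn Ha Hx0 HxPI.
  pose proof (sin_gt_0 x Hx0 HxPI) as Hs.
  destruct p as [|[|[|M]]]; [lia | | |].
  - rewrite Sstar_2; split; [nra|]; split.
    + intro E; left; split; [reflexivity | nra].
    + intros [[_ ->] | [E _]]; [ring | discriminate].
  - change (2 * 2)%nat with 4%nat.
    destruct (Sstar_4_spec a x Ha Hx0 HxPI) as [Hge Heq].
    split; [lra|]; rewrite Heq; split.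
    + intro H; right; split; [reflexivity | exact H].
    + intros [[E _] | [_ H]]; [discriminate | exact H].
  - replace (2 * S (S (S M)))%nat with (2 * S M + 4)%nat by lia.
    pose proof (Sstar_gt_2sin (S M) a x ltac:(lia) Ha Hx0 HxPI).
    split; [lra|]; split; [lra|].
    intros [[E _] | [E _]]; lia.
Qed.
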